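(* Let $m_{\max}$ be the maximum covering number of the compact query space $\mathcal{X}$ at radius $\epsilon$, so $m_{\max}\le(D\sqrt{d_e}/\epsilon)^{d_e}$ with $D$ the diameter. The total number of cache switches triggered by CLCB-SC-LS-Cont up to horizon $T$ satisfies $$\mathbb{E}\Big[\sum_{u\in\mathcal{S}_T}\tau_u(T)\Big]\le\mathcal{O}(m_{\max}\log\log T),\qquad\mathbb{E}[\tau_f(T)]\le\mathcal{O}(\log\log T).$$
   Context: CLCB-SC-LS-Cont (radius $\epsilon$, horizon $T$) maintains a growing set of centers $\mathcal{S}_t\subset\mathcal{X}\subset\mathbb{R}^{d_e}$: an arriving query farther than $\epsilon$ from all centers becomes a new center, otherwise it is mapped to its nearest center; $m_t=|\mathcal{S}_t|$. Each center $u$ has a local stage index $\tau_u$ (starting at 1); $\mathcal{T}(u,\tau)$ is the set of rounds in stage $\tau$ of $u$ at which the LLM was queried on a query mapped to $u$; stage $\tau_u$ ends and $\tau_u$ increases by one when $|\mathcal{T}(u,\tau_u)|\ge1+\sqrt{\frac{T}{m_t}\sum_{\tau<\tau_u}|\mathcal{T}(u,\tau)|}$. A global stage index $\tau_f$ with sets $\mathcal{T}(f,\tau)$ of all arrival rounds in stage $\tau$ increases when $|\mathcal{T}(f,\tau_f)|\ge1+\sqrt{T\sum_{\tau<\tau_f}|\mathcal{T}(f,\tau)|}$. Cache switches occur exactly at stage increments (and at center creations). $\tau_u(T),\tau_f(T)$ are the stage indices at time $T$. *)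

From HB Require Import structures.
From mathcomp Require Import all_boot all_order all_algebra.
From mathcomp Require Import all_classical all_reals all_analysis.
Set Implicit Arguments. Unset Strict Implicit. Unset Printing Implicit Defensive.
Import Order.TTheory GRing.Theory Num.Theory.
Local Open Scope ring_scope.

Section CLCB.
Variables (R : realType) (d : nat).

Definition point := 'rV[R]_d.

Definition edist (x y : point) : R :=
  Num.sqrt (\sum_(i < d) (x ord0 i - y ord0 i) ^+ 2).

Definition eps_separated (X : set point) (eps : R) (s : seq point) : Prop :=
  uniq s /\ (forall x, x \in s -> X x) /\
  (forall x y, x \in s -> y \in s -> x != y -> eps < edist x y).

(* m is the maximum number of epsilon-separated points of X: this is the
   maximal possible number of centers created by the algorithm, i.e. m_max. *)
Definition is_max_cover_number (X : set point) (eps : R) (m : nat) : Prop :=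
  (exists s, eps_separated X eps s /\ size s = m) /\
  (forall s, eps_separated X eps s -> (size s <= m)%N).

(* index of the nearest center in cs (first one in case of ties) *)
Definition nearest (cs : seq point) (x : point) : nat :=
  foldl (fun best j =>
           if edist x (nth 0 cs j) < edist x (nth 0 cs best) then j else best)
        0%N (iota 0 (size cs)).

(* State of the switching bookkeeping of CLCB-SC-LS-Cont.
   Centers are identified by their creation index 0,1,...,m_t - 1. *)
Record state := State {
  centers : seq point;
  lstage  : nat -> nat;
  lcur    : nat -> nat;         (* |T(u, tau_u)| *)
  lprev   : nat -> nat;         (* sum_{tau < tau_u} |T(u, tau)| *)
  gstage  : nat;
  gcur    : nat;                (* |T(f, tau_f)| *)
  gprev   : nat                 (* sum_{tau < tau_f} |T(f, tau)| *)
}.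

Definition init_state : state :=
  State [::] (fun _ => 1%N) (fun _ => 0%N) (fun _ => 0%N) 1%N 0%N 0%N.

Definition upd (f : nat -> nat) (i v : nat) : nat -> nat :=
  fun j => if j == i then v else f j.

(* One round: query x arrives; q says whether the LLM was queried. *)
Definition step (eps : R) (T : nat) (st : state) (x : point) (q : bool)
  : state :=
  let cs := centers st in
  let isnew := all (fun c => eps < edist x c) cs in
  let cs' := if isnew then rcons cs x else cs in
  let i := if isnew then size cs else nearest cs x in
  let m := size cs' in
  let c := (lcur st i + q)%N in
  let lend := (1 + Num.sqrt ((T%:R / m%:R) * (lprev st i)%:R) <= c%:R :> R) in
  let gc := (gcur st).+1 in
  let gend := (1 + Num.sqrt (T%:R * (gprev st)%:R) <= gc%:R :> R) in
  State cs'
    (upd (lstage st) i (lstage st i + lend)%N)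
    (upd (lcur st) i (if lend then 0%N else c))
    (upd (lprev st) i (if lend then (lprev st i + c)%N else lprev st i))
    (gstage st + gend)%N
    (if gend then 0%N else gc)
    (if gend then (gprev st + gc)%N else gprev st).

Fixpoint run (eps : R) (T : nat) (xs : nat -> point) (qs : nat -> bool)
  (t : nat) : state :=
  match t with
  | 0 => init_state
  | t'.+1 => step eps T (run eps T xs qs t') (xs t') (qs t')
  end.

Definition total_local_stages eps T xs qs : nat :=
  let st := run eps T xs qs T in
  (\sum_(u < size (centers st)) lstage st u)%N.

Definition global_stage eps T xs qs : nat := gstage (run eps T xs qs T).

End CLCB.

From Pilot Require Import Defs.
From HB Require Import structures.
From mathcomp Require Import all_boot all_order all_algebra.
From mathcomp Require Import all_classical all_reals all_analysis.
From mathcomp Require Import lra zify measurable_realfun.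
Import Order.TTheory GRing.Theory Num.Theory.
Import numFieldTopology.Exports numFieldNormedType.Exports.
Set Implicit Arguments. Unset Strict Implicit. Unset Printing Implicit Defensive.
Local Open Scope ring_scope.

(* Every stage counter, local or global (the global one is a local one with
   m = M = 1), obeys a bound that does not depend on the queries.  Let L be
   the total length of the completed stages and c the length of the current
   one; with m <= M centers, a stage can end only if T L <= M (c - 1)^2.
   While M L < T, this forces M L >= T^(1 - 2^(1-p)) M^(2^(1-p)) after p >= 1
   stages, so once 2^(2^j) > T there are at most j + 2 such stages.  Every
   later stage has M c >= T, so there are at most M L / T of them; as the
   lengths over all centers sum to at most T, there are at most M later
   stages in total.  With at most m_max centers and j ~ log2 log2 T this gives
   the bounds pathwise, hence in expectation. *)

Section StageCount.
Local Open Scope nat_scope.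
Variables (T j M : nat).

Definition doubling_phase (p L : nat) : Prop :=
  if p is p'.+1 then T ^ (2 ^ p') * M <= T * (M * L) ^ (2 ^ p') else L = 0.

(* [p1] counts the completed stages that started with M L < T, [p2] the others. *)
Definition stage_inv (s L : nat) : Prop :=
  exists p1 p2, [/\ s = 1 + p1 + p2, p1 <= j.+2, p2 * T <= M * L &
    M * L < T -> [/\ p2 = 0, p1 <= j.+1 & doubling_phase p1 L]].

Lemma stage_inv0 : stage_inv 1 0.
Proof. by exists 0, 0; rewrite muln0. Qed.

Lemma stage_inv_le s L : stage_inv s L -> s * T <= j.+3 * T + M * L.
Proof.
case=> p1 [p2 [-> p1_le p2_le _]].
have : p1 * T <= j.+2 * T by rewrite leq_mul2r p1_le orbT.
lia.
Qed.

Hypotheses (T_gt0 : 0 < T) (M_gt0 : 0 < M) (T_lt : T < 2 ^ (2 ^ j)).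

Lemma doubling_phase_step p L c : 0 < c -> T * (M * L) <= (M * c.-1) ^ 2 ->
  doubling_phase p L -> doubling_phase p.+1 (L + c).
Proof.
move=> c_gt0 close; case: p => [/= ->|p /=]; first by rewrite !expn1 add0n; nia.
set n := 2 ^ p => IH.
have Mc : (M * c.-1) ^ 2 <= (M * (L + c)) ^ 2 by rewrite leq_exp2r //; nia.
rewrite expnSr -/n muln2 -addnn expnD -mulnA.
apply: (leq_trans (leq_mul (leqnn _) IH)).
rewrite mulnCA -expnMn leq_mul2l addnn -muln2 mulnC expnM; apply/orP; right.
rewrite -expnM [n * 2]mulnC expnM leq_exp2r ?expn_gt0 // mulnC.
exact: leq_trans close Mc.
Qed.

Lemma lt_double_of_pow n x : T < 2 ^ n -> T ^ n * M <= T * x ^ n -> T < 2 * x.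
Proof.
move=> T_lt2 pow; rewrite ltnNge; apply/negP => le_xT.
have n_gt0 : 0 < n by case: n T_lt2 pow => //; lia.
have Tn_gt0 : 0 < T ^ n by rewrite expn_gt0 T_gt0.
have : T ^ n * T < T ^ n * 2 ^ n by rewrite ltn_pmul2l.
have : (2 * x) ^ n <= T ^ n by rewrite leq_exp2r.
rewrite expnMn; nia.
Qed.

Lemma doubling_phase_exit L c : T * (M * L) <= (M * c.-1) ^ 2 ->
  doubling_phase j.+1 L -> T <= M * (L + c).
Proof.
move=> close /(lt_double_of_pow T_lt) half.
have Mc : M * c.-1 <= M * c by rewrite leq_mul2l; lia.
rewrite mulnDr leqNgt; apply/negP => short.
have small : M * c.-1 <= M * L by lia.
have : T * (M * L) <= M * c.-1 * (M * L).
  by apply: leq_trans close _; rewrite expnS expn1 leq_mul2l small orbT.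
rewrite leq_pmul2r; last by nia.
by move/leq_trans/(_ Mc); rewrite leqNgt (leq_ltn_trans (leq_addl _ _) short).
Qed.

Lemma late_stage_ge L c : T <= M * L -> T * (M * L) <= (M * c.-1) ^ 2 -> T <= M * c.
Proof.
move=> late close; have : T ^ 2 <= (M * c.-1) ^ 2.
  by apply: leq_trans close; rewrite expnS expn1 leq_mul2l late orbT.
by rewrite leq_sqr => /leq_trans; apply; rewrite leq_mul2l leq_pred orbT.
Qed.

Lemma stage_inv_step s L c : 0 < c -> T * L <= c.-1 ^ 2 * M ->
  stage_inv s L -> stage_inv s.+1 (L + c).
Proof.
move=> c_gt0 end_cond [p1 [p2 [-> p1_le p2_le early]]].
have close : T * (M * L) <= (M * c.-1) ^ 2.
  rewrite mulnCA expnMn [M ^ 2]expnS expn1 -mulnA leq_mul2l.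
  by rewrite [M * _ ^ 2]mulnC end_cond orbT.
have MLc : M * (L + c) = M * L + M * c by rewrite mulnDr.
case: (leqP T (M * L)) => [late|early_now].
  have long := late_stage_ge late close.
  exists p1, p2.+1; split => //; first by rewrite addnS.
    by rewrite mulSn MLc addnC leq_add.
  by rewrite MLc ltnNge (leq_trans late (leq_addr _ _)).
have [-> p1_le' phase] := early early_now.
exists p1.+1, 0; split => // still_early; split => //; last exact: doubling_phase_step.
rewrite ltn_neqAle p1_le' andbT; apply/eqP => p1j.
by move: phase; rewrite p1j => /(doubling_phase_exit close); rewrite leqNgt still_early.
Qed.

End StageCount.

Section Centers.
Variables (R : realType) (d : nat).
Implicit Types (x y : 'rV[R]_d) (cs : seq 'rV[R]_d).

Lemma edistC x y : Defs.edist x y = Defs.edist y x.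
Proof. by congr Num.sqrt; apply: eq_bigr => i _; rewrite -sqrrN opprB. Qed.

Lemma edistxx x : Defs.edist x x = 0.
Proof. by rewrite /Defs.edist big1 ?sqrtr0 // => i _; rewrite subrr expr0n. Qed.

Lemma nearest_lt cs x : cs != [::] -> (nearest cs x < size cs)%N.
Proof.
rewrite -size_eq0 -lt0n /nearest; set f := fun _ _ => _ => cs_gt0.
suff foldl_lt b s : (b < size cs)%N -> all (gtn (size cs)) s -> (foldl f b s < size cs)%N.
  by apply: foldl_lt => //; apply/allP => k; rewrite mem_iota.
elim: s b => //= k s IH b b_lt /andP[k_lt s_lt].
by apply: IH => //; rewrite /f; case: ifP.
Qed.

Definition next_centers (eps : R) (st : state R d) x :=
  if all (fun c => eps < Defs.edist x c) (centers st) then rcons (centers st) x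
  else centers st.

Lemma eps_separated_next (X : set 'rV[R]_d) eps st x : 0 < eps -> X x ->
  eps_separated X eps (centers st) -> eps_separated X eps (next_centers eps st x).
Proof.
move=> eps_gt0 Xx [uniq_cs [X_cs sep_cs]]; rewrite /next_centers.
case: allP => // far.
split; [|split].
- rewrite rcons_uniq uniq_cs andbT; apply/negP => /far.
  by rewrite edistxx ltNge (ltW eps_gt0).
- by move=> y; rewrite mem_rcons in_cons => /predU1P[->|/X_cs].
- move=> y z; rewrite !mem_rcons !in_cons.
  move=> /predU1P[->|y_cs] /predU1P[->|z_cs]; rewrite ?eqxx //.
  + by move=> _; exact: far.
  + by move=> _; rewrite edistC; exact: far.
  + exact: sep_cs.
Qed.

Definition center_index (eps : R) (st : state R d) x :=
  if all (fun c => eps < Defs.edist x c) (centers st) then size (centers st)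
  else nearest (centers st) x.

Lemma center_index_lt eps st x : (center_index eps st x < size (next_centers eps st x))%N.
Proof.
rewrite /center_index /next_centers; case: ifP => [_|]; first by rewrite size_rcons.
by case: (centers st) => // c cs _; apply: nearest_lt.
Qed.

End Centers.

Lemma stage_end_nat (R : realType) (T m M L c : nat) : (0 < m)%N -> (m <= M)%N ->
  1 + Num.sqrt (T%:R / m%:R * L%:R) <= c%:R :> R ->
  (0 < c)%N /\ (T * L <= c.-1 ^ 2 * M)%N.
Proof.
move=> m_gt0 le_mM ends.
have y_ge0 : (0 : R) <= T%:R / m%:R * L%:R by [].
have c_gt0 : (0 < c)%N.
  by rewrite -(ltr0n R); have := sqrtr_ge0 (T%:R / m%:R * L%:R : R); lra.
split => //.
have : T%:R / m%:R * L%:R <= (c.-1)%:R ^+ 2 :> R.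
  rewrite -(sqr_sqrtr y_ge0) lerXn2r ?nnegrE ?sqrtr_ge0 //.
  by rewrite -(prednK c_gt0) -natr1 in ends; lra.
rewrite mulrAC ler_pdivrMr ?ltr0n // -!natrX -!natrM ler_nat => /leq_trans; apply.
by rewrite leq_mul2l le_mM orbT.
Qed.

Lemma sum_ord_eqn (N i : nat) : (\sum_(u < N) (u == i :> nat) = (i < N))%N.
Proof.
elim: N => [|N IH]; first by rewrite big_ord0.
by rewrite big_ord_recr /= IH ltnS; case: ltngtP.
Qed.

Section RunInvariant.
Variables (R : realType) (d : nat) (eps : R) (X : set 'rV[R]_d) (T j M : nat).
Hypotheses (eps_gt0 : 0 < eps)
  (M_max : forall s, eps_separated X eps s -> (size s <= M)%N).
Hypotheses (T_gt0 : (0 < T)%N) (T_lt : (T < 2 ^ (2 ^ j))%N).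

Definition run_inv (st : state R d) (t : nat) : Prop :=
  [/\ eps_separated X eps (centers st),
      forall u, stage_inv T j M (lstage st u) (lprev st u),
      forall N, \sum_(u < N) (lprev st u + lcur st u) <= t,
      gprev st + gcur st <= t &
      stage_inv T j 1 (gstage st) (gprev st)]%N.

Lemma run_inv0 : run_inv (init_state R d) 0.
Proof.
split => //= [_ | N | ]; rewrite ?big1 //; exact: stage_inv0.
Qed.

Lemma run_inv_step st t x q : X x -> run_inv st t -> run_inv (step eps T st x q) t.+1.
Proof.
move=> Xx [sep inv sum gsum ginv].
rewrite /step -/(next_centers eps st x) -/(center_index eps st x).
set i := center_index eps st x; set cs := next_centers eps st x.
set lend := (_ <= _ :> R); set gend := (_ <= _ :> R).
have sep' : eps_separated X eps cs := eps_separated_next eps_gt0 Xx sep.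
have i_lt : (i < size cs)%N := center_index_lt eps st x.
have m_le : (size cs <= M)%N := M_max sep'.
have m_gt0 : (0 < size cs)%N := leq_ltn_trans (leq0n i) i_lt.
have M_gt0 : (0 < M)%N := leq_trans m_gt0 m_le.
split => //=.
- move=> u; rewrite /upd; case: eqP => [_|_]; last exact: inv.
  case ends: lend; last by rewrite addn0; exact: inv.
  have [c_gt0 end_cond] := stage_end_nat m_gt0 m_le ends.
  by rewrite addn1; apply: (stage_inv_step T_gt0 M_gt0 T_lt c_gt0 end_cond).
- move=> N.
  rewrite (eq_bigr (fun u : 'I_N => lprev st u + lcur st u + (u == i :> nat) * q)%N).
    rewrite big_split /= -big_distrl sum_ord_eqn.
    by rewrite -[t.+1]addn1 leq_add ?sum //; case: (i < N)%N; rewrite /= ?mul1n ?leq_b1.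
  move=> u _; rewrite /upd; case: eqP => [->|_]; last by rewrite mul0n addn0.
  by rewrite mul1n; case: lend; lia.
- by case: gend; lia.
case ends: gend; last by rewrite addn0.
have ends1 : 1 + Num.sqrt (T%:R / 1%:R * (gprev st)%:R) <= (gcur st).+1%:R :> R.
  by rewrite mulr1n divr1.
have [c_gt0 end_cond] := stage_end_nat (ltnSn 0) (leqnn 1) ends1.
by rewrite addn1; apply: (stage_inv_step T_gt0 (ltnSn 0) T_lt c_gt0 end_cond).
Qed.

Lemma run_inv_run xs qs : (forall t, (t < T)%N -> X (xs t)) ->
  forall t, (t <= T)%N -> run_inv (run eps T xs qs t) t.
Proof.
move=> xs_X; elim=> [|t IH] t_lt; first exact: run_inv0.
by apply: run_inv_step; [exact: xs_X | exact: IH (ltnW t_lt)].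
Qed.

Lemma total_local_stages_le xs qs : (forall t, (t < T)%N -> X (xs t)) ->
  (total_local_stages eps T xs qs <= M * j.+4)%N.
Proof.
move=> /(run_inv_run qs)/(_ T (leqnn T)) [sep inv sum _ _].
rewrite /total_local_stages; set st := run eps T xs qs T in sep inv sum *.
set m := size (centers st); have m_le : (m <= M)%N := M_max sep.
rewrite -(leq_pmul2r T_gt0) big_distrl /=.
apply: (@leq_trans (\sum_(u < m) (j.+3 * T + M * lprev st u))%N).
  by apply: leq_sum => u _; exact: stage_inv_le (inv u).
rewrite big_split /= sum_nat_const card_ord -big_distrr /= -mulnA [(j.+4 * T)%N]mulSn.
rewrite mulnDr [(M * T + _)%N]addnC leq_add ?leq_mul2r ?m_le ?orbT //.
rewrite leq_mul2l; apply/orP; right.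
by apply: leq_trans (sum m); apply: leq_sum => u _; apply: leq_addr.
Qed.

Lemma global_stage_le xs qs : (forall t, (t < T)%N -> X (xs t)) ->
  (global_stage eps T xs qs <= j.+4)%N.
Proof.
move=> /(run_inv_run qs)/(_ T (leqnn T)) -[_ _ _ gsum ginv].
rewrite /global_stage -(leq_pmul2r T_gt0).
apply: leq_trans (stage_inv_le ginv) _.
by rewrite mul1n [(j.+4 * T)%N]mulSn addnC leq_add2r (leq_trans (leq_addr _ _) gsum).
Qed.

End RunInvariant.

Lemma double_exp_bracket (T : nat) : (2 <= T)%N ->
  exists k, (2 ^ (2 ^ k) <= T < 2 ^ (2 ^ k.+1))%N.
Proof.
move=> T_ge2; set l := trunc_log 2 T; exists (trunc_log 2 l).
have l_gt0 : (0 < l)%N by rewrite trunc_log_gt0.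
have l_lo : (2 ^ trunc_log 2 l <= l)%N := trunc_logP (ltnSn 1) l_gt0.
have l_hi : (l < 2 ^ (trunc_log 2 l).+1)%N := trunc_log_ltn l (ltnSn 1).
apply/andP; split.
  by apply: leq_trans (trunc_logP (ltnSn 1) (ltnW T_ge2)); rewrite leq_pexp2l.
by apply: leq_trans (trunc_log_ltn T (ltnSn 1)) _; rewrite leq_pexp2l.
Qed.

Section LnLn.
Variable R : realType.

Lemma expR_mul1B_le1 (x : R) : expR x * (1 - x) <= 1.
Proof.
have := ler_wpM2l (expR_ge0 x) (expR_ge1Dx (- x)).
by rewrite expRN mulfV ?gt_eqF ?expR_gt0 // addrC.
Qed.

Lemma expR_eighth_le : expR (1 / 8) <= 8 / 7 :> R.
Proof. by have := expR_mul1B_le1 (1 / 8); have := expR_gt0 (1 / 8 : R); lra. Qed.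

Lemma le_ln_of_expR (x y : R) : 0 < y -> expR x <= y -> x <= ln y.
Proof. by move=> y_gt0 le_xy; rewrite -ler_expR lnK // posrE. Qed.

Lemma expR_div8_le (n : nat) : expR (n%:R / 8) <= (8 / 7) ^+ n :> R.
Proof.
have -> : n%:R / 8 = n%:R * (1 / 8) :> R by rewrite mul1r.
rewrite expRM_natl; apply: lerXn2r; rewrite ?nnegrE ?expR_ge0 //.
exact: expR_eighth_le.
Qed.

Lemma ln2_ge : 1 / 2 <= ln (2 : R).
Proof.
apply: le_ln_of_expR => //; have -> : 1 / 2 = 4%:R / 8 :> R by lra.
by apply: le_trans (expR_div8_le 4) _; rewrite !exprS expr0; lra.
Qed.

Lemma ln3_ge : 81 / 80 <= ln (3 : R).
Proof.
apply: le_ln_of_expR => //.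
have -> : 81 / 80 = 8%:R / 8 + 1 / 80 :> R by lra.
have e80 : expR (1 / 80) <= 80 / 79 :> R.
  by have := expR_mul1B_le1 (1 / 80); have := expR_gt0 (1 / 80 : R); lra.
rewrite expRD; apply: le_trans (ler_pM (expR_ge0 _) (expR_ge0 _) (expR_div8_le 8) e80) _.
by rewrite !exprS expr0; lra.
Qed.

Lemma lnln_ge_double_exp (T k : nat) : (3 <= T)%N -> (2 ^ (2 ^ k) <= T)%N ->
  (k + 5)%:R <= 1000 * ln (ln (T%:R : R)).
Proof.
move=> T_ge3 T_ge; have T_ge3R : (3 : R) <= T%:R by rewrite (ler_nat R 3).
have lnT_ge : 81 / 80 <= ln (T%:R : R).
  by apply: le_trans ln3_ge _; rewrite ler_ln ?posrE //; lra.
have lnlnT_ge : 1 / 81 <= ln (ln (T%:R : R)).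
  apply: le_ln_of_expR; first lra.
  by have := expR_mul1B_le1 (1 / 81); have := expR_gt0 (1 / 81 : R); lra.
case: (leqP k 1) => [k_le1|k_gt1].
  have : (k + 5)%:R <= 6 :> R by rewrite (ler_nat R _ 6); lia.
  lra.
have lnT_ge2k : (2 ^ k.-1)%N%:R <= ln (T%:R : R).
  have two_k : (2 ^ k)%N%:R = 2 * (2 ^ k.-1)%N%:R :> R.
    by rewrite -natrM -expnS prednK // ltnW.
  have pow_le : (2 ^ (2 ^ k))%N%:R <= T%:R :> R by rewrite ler_nat.
  apply: le_trans (_ : ln (2 ^ (2 ^ k))%N%:R <= _); last first.
    by rewrite ler_ln ?posrE ?ltr0n ?expn_gt0 //; lia.
  rewrite [X in ln X]natrX lnXn // -[ln 2 *+ _]mulr_natr two_k.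
  by have := ln2_ge; have : (0 : R) <= (2 ^ k.-1)%N%:R by []; nra.
have lnlnT_gek : k.-1%:R / 2 <= ln (ln (T%:R : R)).
  apply: le_trans (_ : ln (2 ^ k.-1)%N%:R <= _); last first.
    by rewrite ler_ln ?posrE ?ltr0n ?expn_gt0 //; lra.
  rewrite [X in ln X]natrX lnXn // -[ln 2 *+ _]mulr_natr.
  by have := ln2_ge; have : (0 : R) <= k.-1%:R by []; nra.
have : (k + 5)%:R <= 500 * k.-1%:R :> R by rewrite -natrM ler_nat; lia.
lra.
Qed.

End LnLn.

Section Expectation.
Import HBNNSimple.

(* No measurability of [f] is needed: the integral of a nonnegative function
   is a supremum over the simple functions below it. *)
Lemma expectation_le_ub (R : realType) (dO : measure_display) (Omega : measurableType dO)
    (P : probability Omega R) (f : Omega -> R) (B : R) :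
  (forall w, 0 <= f w) -> (forall w, f w <= B) -> ('E_P[f] <= B%:E)%E.
Proof.
move=> f_ge0 f_le.
rewrite unlock ge0_integralTE; last by move=> w; rewrite lee_fin.
apply: ge_ereal_sup => _ [h /= h_le <-].
have -> : sintegral P h = (\int[P]_w (h w)%:E)%E by rewrite integral_nnsfun // patch_setT.
apply: (@le_trans _ _ (\int[P]_(w in setT) (cst B%:E) w)%E).
  apply: ge0_le_integral => //; first by move=> w _; rewrite lee_fin.
    exact/measurable_EFinP.
  by move=> w _; apply: le_trans (h_le w) _; rewrite lee_fin.
by rewrite integral_cst //; move: (probability_setT P) => /= ->; rewrite mule1.
Qed.

End Expectation.

Theorem mainTheorem7 :
  exists C : nat,
  forall (R : realType) (d : nat) (eps : R) (X : set 'rV[R]_d) (mmax : nat),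
    0 < eps -> compact X -> is_max_cover_number X eps mmax ->
  forall (T : nat), (3 <= T)%N ->
  forall (dO : measure_display) (Omega : measurableType dO)
         (P : probability Omega R)
         (xs : Omega -> nat -> 'rV[R]_d) (qs : Omega -> nat -> bool),
    (forall w t, (t < T)%N -> X (xs w t)) ->
    ('E_P[fun w => (total_local_stages eps T (xs w) (qs w))%:R]
       <= (C%:R * mmax%:R * ln (ln T%:R))%:E)%E /\
    ('E_P[fun w => (global_stage eps T (xs w) (qs w))%:R]
       <= (C%:R * ln (ln T%:R))%:E)%E.
Proof.
exists 1000%N => R d eps X M eps_gt0 _ [_ M_max] T T_ge3 dO Omega P xs qs xs_X.
have [k /andP[T_ge T_lt]] := double_exp_bracket (ltnW T_ge3).
have T_gt0 : (0 < T)%N by lia.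
have lnln_T := @lnln_ge_double_exp R _ _ T_ge3 T_ge.
split; apply: expectation_le_ub => w //.
- have := total_local_stages_le eps_gt0 M_max T_gt0 T_lt (qs w) (xs_X w).
  by rewrite -(ler_nat R) natrM; have : (0 : R) <= M%:R by []; nra.
- have := global_stage_le eps_gt0 M_max T_gt0 T_lt (qs w) (xs_X w).
  by rewrite -(ler_nat R); lra.
Qed.
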